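(* For each $\alpha\in\mathbb{Q}\cap[0,1]$ and each $\varepsilon>0$, there is a finite set $\Psi$ of definable predicates that weakly defines an $\varepsilon$-distal cell decomposition over $M_{[0,1]}$ for $\varphi_\alpha(x;y)$.
   Context: $M_{[0,1]}$ is the set of continuous nondecreasing functions $f:[0,1]\to[0,1]$ with $f(0)=0$, $f(1)=1$, with the sup metric, regarded as a metric structure in the language of binary predicates $\varphi_\alpha$ ($\alpha\in\mathbb{Q}\cap[0,1]$), where $\varphi_\alpha(f,g)=f(t)$ for any $t$ with $f(t)+g(t)=\alpha$ (independent of the choice of $t$). If $\phi(x;y)$ is a definable predicate and $\Psi$ is a finite set of definable predicates each of the form $\psi(x;y_1,\dots,y_k)$, then $\Psi$ weakly defines an $\varepsilon$-distal cell decomposition over $M$ for $\phi(x;y)$ if for every finite $B\subseteq M^y$ with $|B|\geq 2$ and every $a\in M^x$, there are $\psi\in\Psi$ and $b_1,\dots,b_k\in B$ such that $\psi(a;b_1,\dots,b_k)>0$ and for all $a'\in M^x$, $\psi(a';b_1,\dots,b_k)>0$ implies $|\phi(a;b)-\phi(a';b)|\leq\varepsilon$ for all $b\in B$. *)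

From Stdlib Require Import Reals QArith Qreals List ClassicalEpsilon.
Open Scope R_scope.

(** * The structure M_[0,1]
    A continuous nondecreasing f : [0,1] -> [0,1] with f 0 = 0, f 1 = 1 is
    represented by its unique extension to R that is 0 on (-oo,0] and 1 on
    [1,+oo); such extensions are exactly the continuous nondecreasing
    f : R -> R with these boundary values. *)
Definition good (f : R -> R) : Prop :=
  (forall t, continuity_pt f t) /\
  (forall s t, s <= t -> f s <= f t) /\
  (forall t, t <= 0 -> f t = 0) /\
  (forall t, 1 <= t -> f t = 1).

Definition M01 : Type := { f : R -> R | good f }.

Definition fn (f : M01) : R -> R := proj1_sig f.

Definition Rsup (S : R -> Prop) : R :=
  epsilon (inhabits 0) (fun s => is_lub S s).

Definition dM (f g : M01) : R :=
  Rsup (fun r => exists t, 0 <= t <= 1 /\ r = Rabs (fn f t - fn g t)).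

(** phi_alpha(f,g) = f(t) for any t in [0,1] with f(t) + g(t) = alpha. *)
Definition phiA (alpha : Q) (f g : M01) : R :=
  fn f (epsilon (inhabits 0)
          (fun t => 0 <= t <= 1 /\ fn f t + fn g t = Q2R alpha)).

(** Variables are de Bruijn indices; [FSup]/[FInf] bind variable 0.
    Connectives: arbitrary (jointly) continuous u : R -> R -> R (this
    includes constants and unary connectives; by Kolmogorov–Arnold every
    continuous n-ary connective is a composite of such). *)
Definition cont2 (u : R -> R -> R) : Prop :=
  forall x y eps, 0 < eps -> exists delta, 0 < delta /\
    forall x' y', Rabs (x' - x) < delta -> Rabs (y' - y) < delta ->
      Rabs (u x' y' - u x y) < eps.

Inductive form : Type :=
  | FDist : nat -> nat -> form
  | FPhi : Q -> nat -> nat -> form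
  | FConn : forall u : R -> R -> R, cont2 u -> form -> form -> form
  | FSup : form -> form
  | FInf : form -> form.

Fixpoint wf (n : nat) (p : form) : Prop :=
  match p with
  | FDist i j => (i < n)%nat /\ (j < n)%nat
  | FPhi a i j => (0 <= a)%Q /\ (a <= 1)%Q /\ (i < n)%nat /\ (j < n)%nat
  | FConn _ _ p1 p2 => wf n p1 /\ wf n p2
  | FSup p1 => wf (S n) p1
  | FInf p1 => wf (S n) p1
  end.

Definition scons (a : M01) (e : nat -> M01) : nat -> M01 :=
  fun n => match n with O => a | S k => e k end.

Fixpoint eval (p : form) (e : nat -> M01) : R :=
  match p with
  | FDist i j => dM (e i) (e j)
  | FPhi a i j => phiA a (e i) (e j)
  | FConn u _ p1 p2 => u (eval p1 e) (eval p2 e)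
  | FSup p1 => Rsup (fun r => exists m, r = eval p1 (scons m e))
  | FInf p1 => - Rsup (fun r => exists m, r = - eval p1 (scons m e))
  end.

Definition definable (n : nat) (P : (nat -> M01) -> R) : Prop :=
  forall eps, 0 < eps -> exists p, wf n p /\
    forall e, Rabs (P e - eval p e) <= eps.

Record dpred : Type := {
  dp_k : nat;
  dp_P : (nat -> M01) -> R;
  dp_def : definable (S dp_k) dp_P }.

(** psi(a; b_1..b_k) with b_i = bs (i-1). *)
Definition dpval (psi : dpred) (a : M01) (bs : nat -> M01) : R :=
  dp_P psi (scons a bs).

(** Psi weakly defines an eps-distal cell decomposition over M for
    phi(x;y) (x, y single variables). Finite B ⊆ M with |B| >= 2 is a
    duplicate-free list of length >= 2. *)
Definition weakly_distal_cd (Psi : list dpred) (eps : R)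
    (phi : M01 -> M01 -> R) : Prop :=
  forall (B : list M01), NoDup B -> (2 <= length B)%nat ->
  forall a : M01,
    exists psi, In psi Psi /\
    exists bs : nat -> M01,
      (forall i, (i < dp_k psi)%nat -> In (bs i) B) /\
      dpval psi a bs > 0 /\
      forall a' : M01, dpval psi a' bs > 0 ->
        forall b, In b B -> Rabs (phi a b - phi a' b) <= eps.

From Stdlib Require Import Reals QArith Qreals List Lra Lia Classical ClassicalEpsilon.
Open Scope R_scope.

(* For a threshold c, phi_alpha(x, b) > c holds iff x exceeds c at some t at
   which b is still below alpha - c.  Since sublevel sets of nondecreasing
   functions are nested, the sets {x | phi_alpha(x, b) > c} (and likewise with
   < c) form a chain under inclusion as b varies.  So, given a finite B and a
   point a, pick for each grid cut that a satisfies with some b in B the least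
   such witness; any x satisfying all these cuts with their witnesses satisfies
   every grid cut that a satisfies with any b in B.  Grid cuts spaced at most
   eps / 2 apart then keep phi_alpha(x, b) within eps of phi_alpha(a, b). *)

Lemma downsets_comparable {A : Type} (le : A -> A -> Prop) (P Q : A -> Prop) :
  (forall x y, le x y \/ le y x) ->
  (forall x y, le x y -> P y -> P x) -> (forall x y, le x y -> Q y -> Q x) ->
  (forall x, P x -> Q x) \/ (forall x, Q x -> P x).
Proof.
  intros le_total P_down Q_down.
  destruct (classic (forall x, P x -> Q x)) as [PQ | notPQ]; [now left | right].
  apply not_all_ex_not in notPQ as [x0 Hx0].
  apply imply_to_and in Hx0 as [Px0 notQx0].
  intros x Qx. destruct (le_total x x0) as [Hle | Hle].
  - exact (P_down x x0 Hle Px0).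
  - exfalso. exact (notQx0 (Q_down x0 x Hle Qx)).
Qed.

Lemma list_has_least {A : Type} (le : A -> A -> Prop) (P : A -> Prop) (l : list A) :
  (forall x y, le x y \/ le y x) -> (forall x y z, le x y -> le y z -> le x z) ->
  (exists x, In x l /\ P x) ->
  exists m, In m l /\ P m /\ forall x, In x l -> P x -> le m x.
Proof.
  intros le_total le_trans. induction l as [|a l IH]; intros [x [Hx Px]]; [destruct Hx |].
  destruct (classic (exists y, In y l /\ P y)) as [Hl | Hl].
  - destruct (IH Hl) as [m [Hm [Pm m_least]]].
    destruct (classic (P a)) as [Pa | notPa].
    + destruct (le_total a m) as [Ham | Hma].
      * exists a. split; [now left | split; [exact Pa |]].
        intros y [<- | Hy] Py; [now destruct (le_total a a) | eauto].
      * exists m. split; [now right | split; [exact Pm |]].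
        intros y [<- | Hy] Py; auto.
    + exists m. split; [now right | split; [exact Pm |]].
      intros y [<- | Hy] Py; [contradiction | auto].
  - destruct Hx as [<- | Hx]; [| exfalso; eauto].
    exists a. split; [now left | split; [exact Px |]].
    intros y [<- | Hy] Py; [now destruct (le_total a a) | exfalso; eauto].
Qed.

Fixpoint sublists {A : Type} (l : list A) : list (list A) :=
  match l with
  | nil => nil :: nil
  | x :: l' => sublists l' ++ map (cons x) (sublists l')
  end.

Lemma filter_In_sublists {A : Type} (p : A -> bool) (l : list A) :
  In (filter p l) (sublists l).
Proof.
  induction l as [|x l IH]; simpl; [now left |].
  apply in_or_app. destruct (p x); [right; now apply in_map | now left].
Qed.

Section ChainCells.

Variables (X Y Cut : Type) (C : Cut -> X -> Y -> Prop).

Hypothesis C_chain : forall s b1 b2,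
  (forall x, C s x b1 -> C s x b2) \/ (forall x, C s x b2 -> C s x b1).

Lemma exists_least_witness (s : Cut) (a : X) (B : list Y) :
  (exists b, In b B /\ C s a b) ->
  exists w, In w B /\ C s a w /\
    forall b, In b B -> C s a b -> forall x, C s x w -> C s x b.
Proof.
  apply list_has_least; [apply C_chain | firstorder].
Qed.

Lemma chain_cell_decomposition (cuts : list Cut) (B : list Y) (a : X) :
  inhabited Y ->
  exists (sel : list Cut) (w : Cut -> Y), In sel (sublists cuts) /\
    (forall s, In s sel -> In (w s) B /\ C s a (w s)) /\
    forall x, (forall s, In s sel -> C s x (w s)) ->
      forall s b, In s cuts -> In b B -> C s a b -> C s x b.
Proof.
  intros HY.
  pose (witnessed s := exists b, In b B /\ C s a b).
  pose (least s w := In w B /\ C s a w /\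
          forall b, In b B -> C s a b -> forall x, C s x w -> C s x b).
  set (sel := filter (fun s =>
         if excluded_middle_informative (witnessed s) then true else false) cuts).
  assert (Hsel : forall s, In s sel <-> In s cuts /\ witnessed s).
  { intros s. unfold sel. rewrite filter_In.
    destruct (excluded_middle_informative (witnessed s)); intuition discriminate. }
  exists sel, (fun s => epsilon HY (least s)).
  assert (Hleast : forall s, witnessed s -> least s (epsilon HY (least s))).
  { intros s Hs. apply epsilon_spec, exists_least_witness, Hs. }
  split; [apply filter_In_sublists | split].
  - intros s Hs. apply Hsel in Hs as [_ Hs]. now destruct (Hleast s Hs) as [? [? _]].
  - intros x Hx s b Hs Hb Hab.
    assert (Hw : witnessed s) by (exists b; auto).
    destruct (Hleast s Hw) as [_ [_ w_least]].
    apply (w_least b Hb Hab), Hx, Hsel. auto.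
Qed.

End ChainCells.

Lemma fn_increasing (f : M01) : increasing (fn f).
Proof. exact (proj1 (proj2 (proj2_sig f))). Qed.

Lemma fn_bounds (f : M01) (t : R) : 0 <= fn f t <= 1.
Proof.
  destruct f as [f [? [Hmono [H0 H1]]]]; simpl. split.
  - rewrite <- (H0 (Rmin t 0)) by apply Rmin_r. apply Hmono, Rmin_l.
  - rewrite <- (H1 (Rmax t 1)) by apply Rmax_r. apply Hmono, Rmax_l.
Qed.

Lemma Q2R_unit_interval (alpha : Q) :
  (0 <= alpha)%Q -> (alpha <= 1)%Q -> 0 <= Q2R alpha <= 1.
Proof.
  intros H0 H1. rewrite <- RMicromega.Q2R_0, <- RMicromega.Q2R_1.
  split; now apply Qle_Rle.
Qed.

Section PhiAlpha.

Variables (alpha : Q) (alpha_ge0 : (0 <= alpha)%Q) (alpha_le1 : (alpha <= 1)%Q).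

Lemma exists_crossing (f g : M01) :
  exists t, 0 <= t <= 1 /\ fn f t + fn g t = Q2R alpha.
Proof.
  pose proof (Q2R_unit_interval alpha alpha_ge0 alpha_le1).
  destruct f as [f [Hf [? [Hf0 Hf1]]]], g as [g [Hg [? [Hg0 Hg1]]]]; simpl.
  destruct (IVT_cor (fun t => f t + g t - Q2R alpha) 0 1) as [t [Ht Hroot]].
  - intros t. apply continuity_pt_minus; [now apply continuity_pt_plus |].
    apply continuity_pt_const. now intros ? ?.
  - lra.
  - rewrite Hf0, Hg0, Hf1, Hg1 by lra. nra.
  - exists t. split; [exact Ht | lra].
Qed.

Lemma phiA_crossing (f g : M01) :
  exists t, phiA alpha f g = fn f t /\ fn f t + fn g t = Q2R alpha.
Proof.
  exists (epsilon (inhabits 0)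
            (fun t => 0 <= t <= 1 /\ fn f t + fn g t = Q2R alpha)).
  split; [reflexivity |]. apply (epsilon_spec (inhabits 0) _ (exists_crossing f g)).
Qed.

Lemma phiA_bounds (f g : M01) : 0 <= phiA alpha f g <= 1.
Proof. destruct (phiA_crossing f g) as [t [-> _]]. apply fn_bounds. Qed.

Lemma phiA_gt_iff (f g : M01) (c : R) :
  c < phiA alpha f g <-> exists t, c < fn f t /\ fn g t < Q2R alpha - c.
Proof.
  destruct (phiA_crossing f g) as [t0 [-> Ht0]]. split.
  - intros H. exists t0. lra.
  - intros [t [Hft Hgt]]. destruct (Rle_or_lt t t0) as [Hle | Hlt].
    + pose proof (fn_increasing f t t0 Hle). lra.
    + pose proof (fn_increasing g t0 t (Rlt_le _ _ Hlt)). lra.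
Qed.

Lemma phiA_lt_iff (f g : M01) (c : R) :
  phiA alpha f g < c <-> exists t, fn f t < c /\ Q2R alpha - c < fn g t.
Proof.
  destruct (phiA_crossing f g) as [t0 [-> Ht0]]. split.
  - intros H. exists t0. lra.
  - intros [t [Hft Hgt]]. destruct (Rle_or_lt t0 t) as [Hle | Hlt].
    + pose proof (fn_increasing f t0 t Hle). lra.
    + pose proof (fn_increasing g t t0 (Rlt_le _ _ Hlt)). lra.
Qed.

Lemma phiA_gt_chain (c : R) (b1 b2 : M01) :
  (forall x, c < phiA alpha x b1 -> c < phiA alpha x b2) \/
  (forall x, c < phiA alpha x b2 -> c < phiA alpha x b1).
Proof.
  set (d := Q2R alpha - c).
  assert (Hdown : forall (b : M01) t u, t <= u -> fn b u < d -> fn b t < d)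
    by (intros b t u Htu; pose proof (fn_increasing b t u Htu); lra).
  assert (Htotal : forall t u : R, t <= u \/ u <= t)
    by (intros t u; destruct (Rle_or_lt t u); [left | right]; lra).
  destruct (downsets_comparable Rle (fun t => fn b1 t < d) (fun t => fn b2 t < d)
              Htotal (Hdown b1) (Hdown b2)) as [H | H]; [left | right];
    intros x; rewrite !phiA_gt_iff; intros [t [Hx Hb]]; exists t; auto.
Qed.

Lemma phiA_lt_chain (c : R) (b1 b2 : M01) :
  (forall x, phiA alpha x b1 < c -> phiA alpha x b2 < c) \/
  (forall x, phiA alpha x b2 < c -> phiA alpha x b1 < c).
Proof.
  set (d := Q2R alpha - c).
  assert (Hup : forall (b : M01) t u, t >= u -> d < fn b u -> d < fn b t)
    by (intros b t u Htu; pose proof (fn_increasing b u t (Rge_le _ _ Htu)); lra).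
  assert (Htotal : forall t u : R, t >= u \/ u >= t)
    by (intros t u; destruct (Rle_or_lt t u); [right | left]; lra).
  destruct (downsets_comparable Rge (fun t => d < fn b1 t) (fun t => d < fn b2 t)
              Htotal (Hup b1) (Hup b2)) as [H | H]; [left | right];
    intros x; rewrite !phiA_lt_iff; intros [t [Hx Hb]]; exists t; auto.
Qed.

End PhiAlpha.

Definition cut_holds (s : bool * R) (v : R) : Prop :=
  if fst s then snd s < v else v < snd s.

Definition cut_margin (s : bool * R) (v _ : R) : R :=
  if fst s then v - snd s else snd s - v.

Lemma cut_margin_pos (s : bool * R) (v w : R) : cut_margin s v w > 0 <-> cut_holds s v.
Proof. unfold cut_margin, cut_holds. destruct (fst s); lra. Qed.

Lemma phiA_cut_chain (alpha : Q) (s : bool * R) (b1 b2 : M01) :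
  (0 <= alpha)%Q -> (alpha <= 1)%Q ->
  (forall x, cut_holds s (phiA alpha x b1) -> cut_holds s (phiA alpha x b2)) \/
  (forall x, cut_holds s (phiA alpha x b2) -> cut_holds s (phiA alpha x b1)).
Proof.
  intros H0 H1. unfold cut_holds.
  destruct (fst s); [apply phiA_gt_chain | apply phiA_lt_chain]; assumption.
Qed.

Lemma cont2_const (c : R) : cont2 (fun _ _ => c).
Proof.
  intros x y e He. exists 1. split; [lra |]. intros. rewrite Rminus_diag, Rabs_R0. exact He.
Qed.

Lemma cont2_Rmin : cont2 Rmin.
Proof.
  intros x y e He. exists e. split; [exact He |]. intros x' y' Hx Hy.
  apply Rabs_def2 in Hx; apply Rabs_def2 in Hy. apply Rabs_def1;
  unfold Rmin; destruct (Rle_dec x' y'), (Rle_dec x y); lra.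
Qed.

Lemma cont2_cut_margin (s : bool * R) : cont2 (cut_margin s).
Proof.
  intros x y e He. exists e. split; [exact He |]. intros x' y' Hx _.
  apply Rabs_def2 in Hx. unfold cut_margin. destruct (fst s); apply Rabs_def1; lra.
Qed.

Definition trueF : form := FConn (fun _ _ => 1) (cont2_const 1) (FDist 0 0) (FDist 0 0).

Fixpoint cutsF (alpha : Q) (n : nat) (l : list (bool * R)) : form :=
  match l with
  | nil => trueF
  | s :: l' => FConn Rmin cont2_Rmin
      (FConn (cut_margin s) (cont2_cut_margin s) (FPhi alpha 0 (S n)) (FPhi alpha 0 (S n)))
      (cutsF alpha (S n) l')
  end.

Lemma wf_cutsF (alpha : Q) (l : list (bool * R)) (n k : nat) :
  (0 <= alpha)%Q -> (alpha <= 1)%Q -> (n + length l <= k)%nat ->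
  wf (S k) (cutsF alpha n l).
Proof.
  intros H0 H1. revert n. induction l as [|s l IH]; intros n Hk; simpl in *.
  - lia.
  - repeat split; try assumption; try lia. apply IH. lia.
Qed.

Lemma eval_cutsF_pos (alpha : Q) (l : list (bool * R)) (n : nat) (x : M01) (ys : nat -> M01) :
  eval (cutsF alpha n l) (scons x ys) > 0 <->
  forall j, (j < length l)%nat ->
    cut_holds (nth j l (true, 0)) (phiA alpha x (ys (n + j)%nat)).
Proof.
  revert n. induction l as [|s l IH]; intros n; simpl.
  - split; [intros; lia | intros; lra].
  - rewrite Rmin_Rgt, cut_margin_pos, IH. split.
    + intros [Hs Hl] [|j] Hj; simpl.
      * now rewrite Nat.add_0_r.
      * rewrite <- Nat.add_succ_comm. apply Hl. lia.
    + intros H. split.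
      * rewrite <- (Nat.add_0_r n). apply (H 0%nat). lia.
      * intros j Hj. rewrite Nat.add_succ_comm. apply (H (S j)). lia.
Qed.

Lemma definable_eval (n : nat) (p : form) : wf n p -> definable n (eval p).
Proof.
  intros Hwf e He. exists p. split; [exact Hwf |].
  intros env. rewrite Rminus_diag, Rabs_R0. lra.
Qed.

Definition cuts_pred (alpha : Q) (H0 : (0 <= alpha)%Q) (H1 : (alpha <= 1)%Q)
    (l : list (bool * R)) : dpred :=
  {| dp_k := length l;
     dp_P := eval (cutsF alpha 0 l);
     dp_def := definable_eval _ _ (wf_cutsF alpha l 0 _ H0 H1 (le_n _)) |}.

Lemma cuts_pred_pos (alpha : Q) H0 H1 (l : list (bool * R)) (x : M01) (w : bool * R -> M01) :
  dpval (cuts_pred alpha H0 H1 l) x (fun j => w (nth j l (true, 0))) > 0 <->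
  forall s, In s l -> cut_holds s (phiA alpha x (w s)).
Proof.
  unfold dpval; simpl. rewrite eval_cutsF_pos. split.
  - intros H s Hs. destruct (In_nth l s (true, 0) Hs) as [j [Hj <-]]. now apply H.
  - intros H j Hj. apply H, nth_In, Hj.
Qed.

Lemma nat_floor (x : R) : 0 <= x -> exists k : nat, INR k <= x < INR k + 1.
Proof.
  intros Hx. destruct (INR_unbounded x) as [N HN].
  induction N as [|N IH]; [simpl in HN; lra |].
  rewrite S_INR in HN. destruct (Rlt_or_le x (INR N)) as [Hlt | Hle].
  - apply IH. lra.
  - exists N. lra.
Qed.

Definition grid (N : nat) : list R := map (fun k => (INR k - 1) / INR N) (seq 0 (N + 3)).

Lemma grid_brackets (N : nat) (v : R) : (0 < N)%nat -> 0 <= v <= 1 ->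
  exists c, In c (grid N) /\ In (c + 2 / INR N) (grid N) /\ c < v < c + 2 / INR N.
Proof.
  intros HN Hv. assert (HN' : 0 < INR N) by (apply lt_0_INR; exact HN).
  destruct (nat_floor (v * INR N)) as [k [Hk1 Hk2]]; [nra |].
  assert (Hk : (k <= N)%nat) by (apply INR_le; nra).
  assert (Hgrid : forall j, (j < N + 3)%nat -> In ((INR j - 1) / INR N) (grid N))
    by (intros j Hj; apply (in_map (fun j => (INR j - 1) / INR N)), in_seq; lia).
  exists ((INR k - 1) / INR N). split; [| split].
  - apply Hgrid. lia.
  - replace ((INR k - 1) / INR N + 2 / INR N) with ((INR (k + 2) - 1) / INR N)
      by (rewrite plus_INR; simpl; field; lra).
    apply Hgrid. lia.
  - split; apply (Rmult_lt_reg_r (INR N)); try exact HN';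
      unfold Rdiv; rewrite ?Rmult_plus_distr_r, !Rmult_assoc, Rinv_l; lra.
Qed.

Theorem mainTheorem5 :
  forall (alpha : Q), (0 <= alpha)%Q -> (alpha <= 1)%Q ->
  forall eps : R, 0 < eps ->
  exists Psi : list dpred, weakly_distal_cd Psi eps (phiA alpha).
Proof.
  intros alpha H0 H1 eps Heps.
  destruct (archimed_cor1 (eps / 2)) as [N [HN HN0]]; [lra |].
  assert (Hmesh : 2 / INR N <= eps)
    by (unfold Rdiv; rewrite Rmult_comm; lra).
  set (cuts := list_prod (true :: false :: nil) (grid N)).
  exists (map (cuts_pred alpha H0 H1) (sublists cuts)).
  intros B _ _ a.
  destruct (chain_cell_decomposition M01 M01 (bool * R)
              (fun s x b => cut_holds s (phiA alpha x b))
              (fun s b1 b2 => phiA_cut_chain alpha s b1 b2 H0 H1) cuts B a (inhabits a))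
    as [sel [w [Hsel [Hw Hcells]]]].
  exists (cuts_pred alpha H0 H1 sel). split; [now apply in_map |].
  exists (fun j => w (nth j sel (true, 0))). split; [| split].
  - intros j Hj. apply Hw, nth_In, Hj.
  - apply cuts_pred_pos. intros s Hs. apply Hw, Hs.
  - intros x Hx b Hb. rewrite cuts_pred_pos in Hx.
    destruct (grid_brackets N (phiA alpha a b) HN0 (phiA_bounds alpha H0 H1 a b))
      as [c [Hc [Hc' [Hlo Hhi]]]].
    assert (Hxlo : cut_holds (true, c) (phiA alpha x b))
      by (apply (Hcells x Hx); [apply in_prod; simpl; auto | exact Hb | exact Hlo]).
    assert (Hxhi : cut_holds (false, c + 2 / INR N) (phiA alpha x b))
      by (apply (Hcells x Hx); [apply in_prod; simpl; auto | exact Hb | exact Hhi]).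
    unfold cut_holds in Hxlo, Hxhi; simpl in Hxlo, Hxhi.
    apply Rabs_le. lra.
Qed.
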